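(* Let $\mathcal{S}\colon\mathbb{R}^{n\times d}\to\mathbb{R}^{n\times d}$ have $(p,\delta)$-structure. Then $\mathcal{S}$ is bijective and its inverse $\mathcal{D}:=\mathcal{S}^{-1}\colon\mathbb{R}^{n\times d}\to\mathbb{R}^{n\times d}$ has $(p',\delta^{p-1})$-structure, where $p'=p/(p-1)$.
   Context: For $q\in(1,\infty)$ and $\epsilon\ge0$ let $\varphi_{q,\epsilon}(t)=\int_0^t(\epsilon+s)^{q-2}s\,\mathrm ds$; for an N-function $\psi$ and $a\ge0$, the shifted function is $\psi_a(t)=\int_0^t\psi'(a+s)\frac{s}{a+s}\mathrm ds$. A map $\mathcal{T}\colon\mathbb{R}^{n\times d}\to\mathbb{R}^{n\times d}$ has $(q,\epsilon)$-structure if it is continuous, $\mathcal{T}(\mathbf0)=\mathbf0$, and there are constants $C_0,C_1>0$ with $(\mathcal{T}(\mathsf Q)-\mathcal{T}(\mathsf P)):(\mathsf Q-\mathsf P)\ge C_0(\varphi_{q,\epsilon})_{|\mathsf Q|}(|\mathsf Q-\mathsf P|)$ and $|\mathcal{T}(\mathsf Q)-\mathcal{T}(\mathsf P)|\le C_1(\varphi_{q,\epsilon})'_{|\mathsf Q|}(|\mathsf Q-\mathsf P|)$ for all $\mathsf P,\mathsf Q\in\mathbb{R}^{n\times d}$ with $\mathsf Q\ne\mathbf0$. Here $p\in(1,\infty)$, $\delta\ge0$. *)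

From HB Require Import structures.
From mathcomp Require Import all_boot all_order all_algebra.
From mathcomp Require Import all_classical all_reals all_analysis.
Set Implicit Arguments. Unset Strict Implicit. Unset Printing Implicit Defensive.
Import Order.TTheory GRing.Theory Num.Theory.
Import numFieldNormedType.Exports.
Local Open Scope classical_set_scope.
Local Open Scope ring_scope.

Section Defs.
Variable R : realType.

Definition phi_d (q eps : R) (s : R) : R := (eps + s) `^ (q - 2) * s.

Definition phi (q eps : R) (t : R) : R :=
  Rintegral lebesgue_measure `[0, t] (phi_d q eps).

(* shifted N-function, given the derivative psi' of psi:
   psi_a(t) = int_0^t psi'(a+s) s/(a+s) ds *)
Definition shifted (psi' : R -> R) (a t : R) : R :=
  Rintegral lebesgue_measure `[0, t] (fun s => psi' (a + s) * s / (a + s)).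

Definition shifted_d (psi' : R -> R) (a t : R) : R :=
  psi' (a + t) * t / (a + t).

Definition frob_dot n d (A B : 'M[R]_(n, d)) : R :=
  \sum_(i < n) \sum_(j < d) A i j * B i j.
Definition frob_norm n d (A : 'M[R]_(n, d)) : R := Num.sqrt (frob_dot A A).

Definition has_structure n d (q eps : R) (T : 'M[R]_(n, d) -> 'M[R]_(n, d)) : Prop :=
  continuous T /\ T 0 = 0 /\
  exists C0 C1 : R, 0 < C0 /\ 0 < C1 /\
    forall P Q : 'M[R]_(n, d), Q != 0 ->
      frob_dot (T Q - T P) (Q - P)
        >= C0 * shifted (phi_d q eps) (frob_norm Q) (frob_norm (Q - P)) /\
      frob_norm (T Q - T P)
        <= C1 * shifted_d (phi_d q eps) (frob_norm Q) (frob_norm (Q - P)).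
End Defs.

From HB Require Import structures.
From mathcomp Require Import all_boot all_order all_algebra.
From mathcomp Require Import all_classical all_reals all_analysis.
From mathcomp Require Import ring lra.
Import Order.TTheory GRing.Theory Num.Theory.
Import numFieldNormedType.Exports Num.Def.
Local Open Scope classical_set_scope.
Local Open Scope ring_scope.
Set Implicit Arguments. Unset Strict Implicit. Unset Printing Implicit Defensive.

(* Writing [phi'_a(t) = (delta + a + t)^(p-2) t] for the derivative of the shifted function,
   one has [phi_a(t) ~ t phi'_a(t)], so the structure conditions are two-sided bounds on
   [S Q - S P] in terms of this weight.  Such an [S] is strictly monotone, hence injective;
   continuous, since its Lipschitz bound vanishes as [t -> 0]; and coercive.  By compactness
   [x |-> |S x - y|] has a minimiser, which solves [S x = y]: otherwise a small step towards
   [y - S x] decreases the distance.  For the inverse, [delta^(p-1) + |S a| + |S a - S b|] is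
   comparable to [(delta + |a| + |a - b|)^(p-1)], which turns the weights of exponent [p]
   into those of [p' = p / (p - 1)] with shift [delta^(p-1)]. *)

Section FrobeniusNorm.
Variables (R : realType) (n d : nat).
Local Notation M := 'M[R]_(n, d).
Local Notation dot := (@frob_dot R n d).
Local Notation nrm := (@frob_norm R n d).

Lemma frob_dotC (A B : M) : dot A B = dot B A.
Proof. by apply: eq_bigr => i _; apply: eq_bigr => j _; rewrite mulrC. Qed.

Lemma frob_dotDl (A B C : M) : dot (A + B) C = dot A C + dot B C.
Proof.
rewrite /frob_dot -big_split; apply: eq_bigr => i _; rewrite -big_split.
by apply: eq_bigr => j _; rewrite !mxE mulrDl.
Qed.

Lemma frob_dotZl k (A B : M) : dot (k *: A) B = k * dot A B.
Proof.
rewrite /frob_dot mulr_sumr; apply: eq_bigr => i _; rewrite mulr_sumr.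
by apply: eq_bigr => j _; rewrite !mxE mulrA.
Qed.

Lemma frob_dotNl (A B : M) : dot (- A) B = - dot A B.
Proof. by rewrite -scaleN1r frob_dotZl mulN1r. Qed.

Lemma frob_dotBl (A B C : M) : dot (A - B) C = dot A C - dot B C.
Proof. by rewrite frob_dotDl frob_dotNl. Qed.

Lemma frob_dotZr k (A B : M) : dot A (k *: B) = k * dot A B.
Proof. by rewrite frob_dotC frob_dotZl frob_dotC. Qed.

Lemma frob_dotNr (A B : M) : dot A (- B) = - dot A B.
Proof. by rewrite frob_dotC frob_dotNl frob_dotC. Qed.

Lemma frob_dotBr (A B C : M) : dot A (B - C) = dot A B - dot A C.
Proof. by rewrite !(frob_dotC A) frob_dotBl. Qed.

Lemma frob_dotDr (A B C : M) : dot A (B + C) = dot A B + dot A C.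
Proof. by rewrite !(frob_dotC A) frob_dotDl. Qed.

Lemma frob_dot0l (A : M) : dot 0 A = 0.
Proof. by rewrite -(scale0r (0 : M)) frob_dotZl mul0r. Qed.

Lemma frob_dot0r (A : M) : dot A 0 = 0.
Proof. by rewrite frob_dotC frob_dot0l. Qed.

Lemma sqr_entry_le_frob_dot (A : M) i j : A i j ^+ 2 <= dot A A.
Proof.
rewrite /frob_dot (bigD1 i) //= (bigD1 j) //= -expr2 -addrA lerDl.
rewrite addr_ge0 //; first by apply: sumr_ge0 => k _; rewrite -expr2 sqr_ge0.
by apply: sumr_ge0 => k _; apply: sumr_ge0 => l _; rewrite -expr2 sqr_ge0.
Qed.

Lemma frob_dotxx_ge0 (A : M) : 0 <= dot A A.
Proof. by apply: sumr_ge0 => i _; apply: sumr_ge0 => j _; rewrite -expr2 sqr_ge0. Qed.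

Lemma frob_norm_ge0 (A : M) : 0 <= nrm A.
Proof. exact: sqrtr_ge0. Qed.

Lemma sqr_frob_norm (A : M) : nrm A ^+ 2 = dot A A.
Proof. by rewrite sqr_sqrtr // frob_dotxx_ge0. Qed.

Lemma entry_le_frob_norm (A : M) i j : `|A i j| <= nrm A.
Proof.
rewrite -(ler_pXn2r (isT : (0 < 2)%N)) ?nnegrE ?frob_norm_ge0 //.
by rewrite real_normK ?num_real // sqr_frob_norm sqr_entry_le_frob_dot.
Qed.

Lemma frob_norm_eq0 (A : M) : (nrm A == 0) = (A == 0).
Proof.
apply/idP/idP => [/eqP nA0|/eqP ->]; last by rewrite /frob_norm frob_dot0l sqrtr0.
apply/eqP/matrixP => i j; apply/eqP; rewrite mxE -normr_le0 -nA0.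
exact: entry_le_frob_norm.
Qed.

Lemma frob_norm0 : nrm 0 = 0.
Proof. by apply/eqP; rewrite frob_norm_eq0. Qed.

Lemma frob_norm_gt0 (A : M) : A != 0 -> 0 < nrm A.
Proof. by rewrite lt_def frob_norm_eq0 frob_norm_ge0 andbT. Qed.

Lemma frob_normZ k (A : M) : nrm (k *: A) = `|k| * nrm A.
Proof.
by rewrite /frob_norm frob_dotZl frob_dotZr mulrA -expr2 sqrtrM ?sqr_ge0 // sqrtr_sqr.
Qed.

Lemma frob_normN (A : M) : nrm (- A) = nrm A.
Proof. by rewrite -scaleN1r frob_normZ normrN1 mul1r. Qed.

Lemma frob_distC (A B : M) : nrm (A - B) = nrm (B - A).
Proof. by rewrite -frob_normN opprB. Qed.

Lemma sqr_frob_normB (A B : M) : nrm (A - B) ^+ 2 = nrm A ^+ 2 - 2 * dot A B + nrm B ^+ 2.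
Proof. by rewrite !sqr_frob_norm frob_dotBl !frob_dotBr (frob_dotC B A); ring. Qed.

(* Cauchy-Schwarz, from the discriminant of [t |-> dot (A + t B) (A + t B)] *)
Lemma frob_dot_le (A B : M) : dot A B <= nrm A * nrm B.
Proof.
have [->|B0] := eqVneq B 0; first by rewrite frob_dot0r frob_norm0 mulr0.
have [AB_le0|AB_gt0] := lerP (dot A B) 0.
  by apply: le_trans AB_le0 _; rewrite mulr_ge0 ?frob_norm_ge0.
have BB_gt0 : 0 < dot B B by rewrite -sqr_frob_norm exprn_gt0 // frob_norm_gt0.
pose t := - (dot A B / dot B B).
have discr : dot B B * dot (A + t *: B) (A + t *: B) = dot A A * dot B B - dot A B ^+ 2.
  rewrite frob_dotDl !frob_dotDr !frob_dotZl !frob_dotZr (frob_dotC B A) /t.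
  by field; rewrite gt_eqF.
have : dot A B ^+ 2 <= dot A A * dot B B.
  by rewrite -subr_ge0 -discr mulr_ge0 ?frob_dotxx_ge0 ?ltW.
rewrite -!sqr_frob_norm -exprMn ler_pXn2r // nnegrE ?mulr_ge0 ?frob_norm_ge0 //.
exact: ltW.
Qed.

Lemma frob_normD (A B : M) : nrm (A + B) <= nrm A + nrm B.
Proof.
rewrite -(ler_pXn2r (isT : (0 < 2)%N)) ?nnegrE ?addr_ge0 ?frob_norm_ge0 //.
rewrite sqr_frob_norm frob_dotDl !frob_dotDr (frob_dotC B A) sqrrD !sqr_frob_norm.
have := frob_dot_le A B; lra.
Qed.

Lemma frob_lerB_dist (A B : M) : nrm A - nrm B <= nrm (A - B).
Proof. have := frob_normD (A - B) B; rewrite subrK; lra. Qed.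

Lemma frob_ler_dist_dist (A B : M) : `|nrm A - nrm B| <= nrm (A - B).
Proof. by rewrite ler_norml frob_lerB_dist frob_distC lerNl opprB frob_lerB_dist. Qed.

Lemma entry_le_mx_norm (A : M) i j : `|A i j| <= `|A|.
Proof. by rewrite [leRHS]/normr /= mx_normrE (le_bigmax _ _ (i, j)). Qed.

Lemma frob_norm_le_mx_norm (A : M) : nrm A <= Num.sqrt (n * d)%:R * `|A|.
Proof.
rewrite -[`|A|]ger0_norm // -sqrtr_sqr -sqrtrM ?ler0n // ler_sqrt ?mulr_ge0 ?sqr_ge0 //.
have -> : (n * d)%:R * `|A| ^+ 2 = \sum_(i < n) \sum_(j < d) `|A| ^+ 2.
  by rewrite !sumr_const !card_ord -mulrnA mulnC mulr_natl.
apply: ler_sum => i _; apply: ler_sum => j _.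
by rewrite -expr2 -real_normK ?num_real // lerXn2r ?nnegrE ?entry_le_mx_norm.
Qed.

Lemma mx_norm_le_frob_norm (A : M) : `|A| <= nrm A.
Proof.
rewrite [leLHS]/normr /= mx_normrE; apply/bigmax_leP; split; first exact: frob_norm_ge0.
by move=> [i j] _; exact: entry_le_frob_norm.
Qed.

Lemma near_frob_ball (x : M) (r : R) (P : M -> Prop) : 0 < r ->
  (forall y : M, nrm (x - y) < r -> P y) -> \forall y \near x, P y.
Proof.
move=> r0 Pr; apply/nbhs_normP.
have N0 : 0 < Num.sqrt (n * d)%:R + 1 :> R by rewrite ltr_wpDl ?sqrtr_ge0.
exists (r / (Num.sqrt (n * d)%:R + 1)); first exact: divr_gt0.
move=> y /= xy; apply: Pr; apply: le_lt_trans (frob_norm_le_mx_norm _) _.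
rewrite ltr_pdivlMr // in xy.
have := normr_ge0 (x - y); nra.
Qed.

Lemma frob_continuous (f : M -> M) :
  (forall (x : M) (e : R), 0 < e ->
    exists2 r : R, 0 < r & forall y : M, nrm (x - y) < r -> nrm (f x - f y) < e) ->
  continuous f.
Proof.
move=> f_cont x; apply/(@cvgrPdist_lt _ _ _ (nbhs x)) => e e0.
have [r r0 fr] := f_cont x e e0.
by apply: near_frob_ball r0 _ => y /fr; apply: le_lt_trans (mx_norm_le_frob_norm _).
Qed.

Lemma frob_norm_continuous : continuous nrm.
Proof.
move=> x; apply/(@cvgrPdist_lt _ _ _ (nbhs x)) => e e0; apply: near_frob_ball e0 _ => y.
exact: le_lt_trans (frob_ler_dist_dist _ _).
Qed.

Lemma mx_box_compact (r : R) : compact [set A : M | forall i j, `|A i j| <= r].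
Proof.
have vec_entry (v : 'rV[R]_(n * d)) i j : vec_mx v i j = v 0 (mxvec_index i j).
  by rewrite -mxvecE vec_mxK.
have -> : [set A : M | forall i j, `|A i j| <= r] =
    vec_mx @` [set v : 'rV[R]_(n * d) | forall k, `[- r, r]%classic (v 0 k)].
  apply/seteqP; split => [A Ar|_ [v vr <-] i j].
    exists (mxvec A); last by rewrite mxvecK.
    by case/mxvec_indexP => i j; rewrite mxvecE /= in_itv /= -ler_norml.
  by rewrite vec_entry ler_norml; have := vr (mxvec_index i j); rewrite /= in_itv.
apply: continuous_compact; last first.
  by apply: (@rV_compact _ _ (fun=> `[- r, r]%classic)) => k; exact: segment_compact.
apply: continuous_subspaceT => v B /= /nbhs_ballP[e e0 eB]; apply/nbhs_ballP.
by exists e => // w [_ vw]; apply: eB; split => // i j; rewrite !vec_entry; apply: vw.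
Qed.

End FrobeniusNorm.

Lemma ger_powR_le0 (R : realType) (r x y : R) : r <= 0 -> 0 < x -> x <= y ->
  y `^ r <= x `^ r.
Proof.
move=> r0 x0 xy; have y0 : 0 < y by lra.
rewrite -(opprK r) (powRN x) (powRN y) lef_pV2 ?posrE ?powR_gt0 //.
by apply: ge0_ler_powR; rewrite ?nnegrE; lra.
Qed.

Lemma powRVK (R : realType) (r x : R) : r != 0 -> 0 <= x -> (x `^ r^-1) `^ r = x.
Proof. by move=> r0 x0; rewrite -powRrM mulVf // powRr1. Qed.

Section ShiftedPhi.
Variable R : realType.
Implicit Types q b e a s t u v K B eta : R.
Local Notation mu := (@lebesgue_measure R).

Lemma phi_dE q b s : 0 < b + s -> phi_d q b s = (b + s) `^ (q - 1) * (s / (b + s)).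
Proof.
move=> bs; rewrite /phi_d (_ : q - 2 = (q - 1) - 1); last by ring.
rewrite powRB ?(gt_eqF bs) ?implybT // powRr1 ?(ltW bs) //.
by rewrite mulrAC mulrA.
Qed.

Lemma phi_d_ge0 q b s : 0 <= s -> 0 <= phi_d q b s.
Proof. by move=> s0; rewrite mulr_ge0 // powR_ge0. Qed.

Lemma phi_d_gt0 q b s : 0 < b + s -> 0 < s -> 0 < phi_d q b s.
Proof. by move=> bs s0; rewrite mulr_gt0 // powR_gt0. Qed.

Lemma phi_d_continuous q b s : 0 < b + s -> {for s, continuous (phi_d q b)}.
Proof.
move=> bs; apply: continuousM; last exact: cvg_id.
apply: (@continuous_comp _ _ _ (fun s => b + s) (fun y => y `^ (q - 2))).
  by apply: cvgD; [exact: cvg_cst | exact: cvg_id].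
apply: differentiable_continuous; apply/derivable1_diffP.
by apply: derivable_powR; rewrite in_itv /= andbT.
Qed.

Lemma phi_d_le_powR q b s : 0 < b -> 0 <= s -> phi_d q b s <= (b + s) `^ (q - 1).
Proof.
move=> b0 s0; have bs : 0 < b + s by lra.
rewrite phi_dE // -[leRHS]mulr1 ler_wpM2l ?powR_ge0 //.
by rewrite ler_pdivrMr // mul1r; lra.
Qed.

Lemma powR_le_phi_d q b s K : 0 < s -> 0 <= b -> b + s <= K * s ->
  (b + s) `^ (q - 1) / K <= phi_d q b s.
Proof.
move=> s0 b0 bsK; have bs : 0 < b + s by lra.
have K0 : 0 < K by rewrite -(pmulr_lgt0 _ s0); lra.
rewrite phi_dE //; apply: ler_wpM2l; first exact: powR_ge0.
by rewrite ler_pdivlMr // mulrC ler_pdivrMr // mulrC.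
Qed.

Lemma le_phi_d q b (s1 s2 : R) : 1 < q -> 0 < b -> 0 <= s1 -> s1 <= s2 ->
  phi_d q b s1 <= phi_d q b s2.
Proof.
move=> q1 b0 s10 s12.
have bs1 : 0 < b + s1 by lra.
have bs2 : 0 < b + s2 by lra.
rewrite !phi_dE //; apply: ler_pM.
- exact: powR_ge0.
- by rewrite divr_ge0 // ltW.
- by apply: ge0_ler_powR; rewrite ?nnegrE; lra.
- by rewrite ler_pdivrMr // mulrAC ler_pdivlMr //; nra.
Qed.

Lemma phi_d_half q b t : 1 < q -> 0 < b -> 0 <= t ->
  2^-1 `^ (q - 1) / 2 * phi_d q b t <= phi_d q b (t / 2).
Proof.
move=> q1 b0 t0.
have bt : 0 < b + t by lra.
have bt2 : 0 < b + t / 2 by lra.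
rewrite !phi_dE //.
have pow_half : 2^-1 `^ (q - 1) * (b + t) `^ (q - 1) <= (b + t / 2) `^ (q - 1).
  rewrite -powRM ?invr_ge0 ?(ltW bt) //.
  by apply: ge0_ler_powR; rewrite ?nnegrE; lra.
have ratio_half : t / (b + t) / 2 <= t / 2 / (b + t / 2).
  by rewrite mulrAC ler_pdivrMr // mulrAC ler_pdivlMr //; nra.
have ratio_ge0 : 0 <= t / (b + t) / 2 by rewrite !divr_ge0 // ltW.
have := ler_pM (mulr_ge0 (powR_ge0 _ _) (powR_ge0 _ _)) ratio_ge0 pow_half ratio_half.
lra.
Qed.

Lemma phi_d_small q B eta : 1 < q -> 0 <= B -> 0 < eta ->
  exists2 rho : R, 0 < rho & forall b s : R, 0 <= b -> b <= B -> 0 <= s -> s < rho ->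
    phi_d q b s < eta.
Proof.
move=> q1 B0 eta0; have [q2|q2] := leP 2 q.
  pose K := (B + 1) `^ (q - 2).
  have K0 : 0 < K by rewrite powR_gt0 //; lra.
  exists (minr 1 (eta / K)) => [|b s b0 bB s0]; first by rewrite lt_min ltr01 divr_gt0.
  rewrite lt_min => /andP[s1 sK].
  apply: le_lt_trans (_ : K * s < eta); last by rewrite -ltr_pdivlMl // mulrC.
  rewrite /phi_d mulrC [K * _]mulrC ler_wpM2l //.
  by apply: ge0_ler_powR; rewrite ?nnegrE; lra.
exists (minr 1 (eta `^ (q - 1)^-1)) => [|b s b0 bB s0].
  by rewrite lt_min ltr01 powR_gt0.
rewrite lt_min => /andP[s1 s_eta].
have [->|s_neq0] := eqVneq s 0; first by rewrite /phi_d mulr0.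
have s_gt0 : 0 < s by rewrite lt_def s_neq0.
apply: le_lt_trans (_ : s `^ (q - 1) < eta).
  rewrite /phi_d -(@mulr_powRB1 _ s (q - 1)); [|lra|lra].
  rewrite (_ : q - 1 - 1 = q - 2); last by ring.
  by rewrite mulrC ler_wpM2l // ger_powR_le0 //; lra.
have q1_neq0 : q - 1 != 0 by rewrite gt_eqF // subr_gt0.
rewrite -[X in _ < X](powRVK q1_neq0 (ltW eta0)).
by apply: gt0_ltr_powR; rewrite ?nnegrE ?powR_ge0 //; lra.
Qed.

Lemma shifted_d_phi_d q e a t : 0 < a -> 0 <= t ->
  shifted_d (phi_d q e) a t = phi_d q (e + a) t.
Proof.
move=> a0 t0; have at0 : a + t != 0 by rewrite gt_eqF //; lra.
by rewrite /shifted_d /phi_d addrA; field.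
Qed.

Lemma phi_d_integrable q b u v : 0 < b -> 0 <= u ->
  mu.-integrable `[u, v] (EFin \o phi_d q b).
Proof.
move=> b0 u0; apply: continuous_compact_integrable; first exact: segment_compact.
apply: continuous_in_subspaceT => x; rewrite inE /= in_itv /= => /andP[ux _].
by apply: phi_d_continuous; lra.
Qed.

Lemma Rintegral_itv_cst (c u v : R) : u <= v -> \int[mu]_(x in `[u, v]) c = c * (v - u).
Proof.
move=> uv; rewrite Rintegral_cst //= lebesgue_measure_itv /= lte_fin.
have [//|vu] := ltP u v.
have -> : v = u by apply/eqP; rewrite eq_le uv vu.
by rewrite subrr.
Qed.

Lemma cst_integrable (c u v : R) : mu.-integrable `[u, v] (EFin \o cst c).
Proof.
apply: continuous_compact_integrable; first exact: segment_compact.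
by apply: continuous_subspaceT => x; exact: cvg_cst.
Qed.

Lemma shifted_phi_d q e a t : 0 < a ->
  shifted (phi_d q e) a t = \int[mu]_(s in `[0, t]) phi_d q (e + a) s.
Proof.
move=> a0; apply: eq_Rintegral => s; rewrite inE /= in_itv /= => /andP[s0 _].
by rewrite -shifted_d_phi_d.
Qed.

Lemma shifted_phi_d_le q e a t : 1 < q -> 0 <= e -> 0 < a -> 0 <= t ->
  shifted (phi_d q e) a t <= t * phi_d q (e + a) t.
Proof.
move=> q1 e0 a0 t0; rewrite shifted_phi_d // mulrC -[X in _ * X]subr0.
rewrite -Rintegral_itv_cst //; apply: le_Rintegral => //.
- by apply: phi_d_integrable; lra.
- exact: cst_integrable.
- by move=> s; rewrite /= in_itv /= => /andP[s0 st]; apply: le_phi_d => //; lra.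
Qed.

Lemma shifted_phi_d_ge q e a t : 1 < q -> 0 <= e -> 0 < a -> 0 <= t ->
  2^-1 `^ (q - 1) / 4 * (t * phi_d q (e + a) t) <= shifted (phi_d q e) a t.
Proof.
move=> q1 e0 a0 t0; rewrite shifted_phi_d //.
have ea : 0 < e + a by lra.
have split_itv : `[0, t]%classic = `[0, t / 2[%classic `|` `[t / 2, t]%classic :> set R.
  by rewrite -itv_bndbnd_setU //= bnd_simp; lra.
rewrite split_itv Rintegral_setU //; last 2 first.
- by rewrite -split_itv; exact: phi_d_integrable.
- by apply/disj_setPS => s [/=]; rewrite !in_itv /= => /andP[_ ?] /andP[? _]; lra.
apply: le_trans (_ : \int[mu]_(s in `[t / 2, t]) phi_d q (e + a) (t / 2) <= _).
  rewrite Rintegral_itv_cst; last lra.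
  have := phi_d_half q1 ea t0; have := phi_d_ge0 q (e + a) t0; nra.
rewrite -[X in X <= _]add0r; apply: lerD.
  by apply: Rintegral_ge0 => s; rewrite /= in_itv /= => /andP[s0 _]; exact: phi_d_ge0.
apply: le_Rintegral => //; [exact: cst_integrable | by apply: phi_d_integrable; lra |].
by move=> s; rewrite /= in_itv /= => /andP[s0 st]; apply: le_phi_d => //; lra.
Qed.

End ShiftedPhi.

Section ConjugateWeights.
Variable R : realType.

Lemma powR_sandwich (r k1 k2 : R) : 0 < k1 -> 0 < k2 ->
  exists lo hi : R, [/\ 0 < lo, 0 < hi & forall x y : R, 0 < y -> k1 * y <= x -> x <= k2 * y ->
    lo * y `^ r <= x `^ r /\ x `^ r <= hi * y `^ r].
Proof.
move=> k1_gt0 k2_gt0.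
have [r0|r0] := leP 0 r.
  exists (k1 `^ r), (k2 `^ r); split; rewrite ?powR_gt0 // => x y y0 k1x xk2.
  have k1y : 0 <= k1 * y by rewrite mulr_ge0 // ltW.
  rewrite -!powRM ?(ltW k1_gt0) ?(ltW k2_gt0) ?(ltW y0) //.
  by split; apply: ge0_ler_powR; rewrite ?nnegrE //; lra.
exists (k2 `^ r), (k1 `^ r); split; rewrite ?powR_gt0 // => x y y0 k1x xk2.
have k1y : 0 < k1 * y by rewrite mulr_gt0.
rewrite -!powRM ?(ltW k1_gt0) ?(ltW k2_gt0) ?(ltW y0) //.
by split; apply: ger_powR_le0; rewrite ?(ltW r0) //; lra.
Qed.

(* Applied with [A = |S a|] and [s = |S a - S b|] for [S] with (p, dl)-structure: this is
   where the shift [dl^(p-1)] of the conjugate weight comes from. *)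
Lemma phi_d_weight_comparable (p dl c C : R) : 1 < p -> 0 <= dl -> 0 < c -> 0 < C ->
  exists k1 k2 : R, [/\ 0 < k1, 0 < k2 & forall a t A s : R, 0 < a -> 0 <= t ->
   c * phi_d p (dl + a) a <= A -> A <= C * phi_d p (dl + a) a ->
   c * phi_d p (dl + a) t <= s -> s <= C * phi_d p (dl + a) t ->
   k1 * (dl + a + t) `^ (p - 1) <= dl `^ (p - 1) + A + s /\
   dl `^ (p - 1) + A + s <= k2 * (dl + a + t) `^ (p - 1)].
Proof.
move=> p1 dl0 c0 C0.
have pow_le (x y : R) : 0 <= x -> x <= y -> x `^ (p - 1) <= y `^ (p - 1).
  by move=> x0 xy; apply: ge0_ler_powR; rewrite ?nnegrE //; lra.
exists (minr 1 (c / 3) * 3^-1 `^ (p - 1)), (1 + C * 2 `^ (p - 1) + C); split.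
- by rewrite mulr_gt0 ?powR_gt0 // lt_min ltr01 divr_gt0.
- by rewrite !addr_gt0 ?mulr_gt0 ?powR_gt0.
move=> a t A s a0 t0 cA AC cs sC; set m := dl + a + t; have mE : m = dl + a + t by [].
have m0 : 0 < m by lra.
have A0 : 0 <= A by apply: le_trans cA; rewrite mulr_ge0 ?phi_d_ge0 // ltW.
have s0 : 0 <= s by apply: le_trans cs; rewrite mulr_ge0 ?phi_d_ge0 // ltW.
have dl_le : dl `^ (p - 1) <= m `^ (p - 1) by apply: pow_le; lra.
split.
  have w_le : (m / 3) `^ (p - 1) <= m `^ (p - 1) by apply: pow_le; lra.
  suff : minr 1 (c / 3) * (m / 3) `^ (p - 1) <= dl `^ (p - 1) + A + s.
    by rewrite (powRM _ (ltW m0)) ?invr_ge0 // [_ * 3^-1 `^ _]mulrC mulrA.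
  have k1_le1 : minr 1 (c / 3) <= 1 by rewrite ge_min lexx.
  have k1_lec : minr 1 (c / 3) <= c / 3 by rewrite ge_min lexx orbT.
  have w0 : 0 <= (m / 3) `^ (p - 1) by exact: powR_ge0.
  have dl_pow0 : 0 <= dl `^ (p - 1) by exact: powR_ge0.
  have k1w : minr 1 (c / 3) * (m / 3) `^ (p - 1) <= c * ((m / 3) `^ (p - 1) / 3).
    by apply: le_trans (ler_wpM2r w0 k1_lec) _; lra.
  have [dl_big|dl_small] := leP (m / 3) dl.
    have : (m / 3) `^ (p - 1) <= dl `^ (p - 1) by apply: pow_le; lra.
    nra.
  have [a_big|a_small] := leP (m / 3) a.
    have : (dl + a + a) `^ (p - 1) / 3 <= phi_d p (dl + a) a.
      by apply: powR_le_phi_d => //; lra.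
    have : (m / 3) `^ (p - 1) <= (dl + a + a) `^ (p - 1) by apply: pow_le; lra.
    move=> wP Pphi; apply: le_trans k1w _.
    have : c * ((m / 3) `^ (p - 1) / 3) <= A by apply: le_trans cA; rewrite ler_pM2l //; lra.
    lra.
  have : m `^ (p - 1) / 3 <= phi_d p (dl + a) t.
    by apply: powR_le_phi_d; lra.
  move=> mphi; apply: le_trans k1w _.
  have : c * ((m / 3) `^ (p - 1) / 3) <= s by apply: le_trans cs; rewrite ler_pM2l //; lra.
  lra.
have A_le : A <= C * 2 `^ (p - 1) * m `^ (p - 1).
  apply: (le_trans AC); rewrite -mulrA ler_pM2l // -powRM ?(ltW m0) //.
  by apply: le_trans (phi_d_le_powR _ _ _) (pow_le _ _ _ _); lra.
have s_le : s <= C * m `^ (p - 1).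
  by apply: (le_trans sC); rewrite ler_pM2l //; apply: phi_d_le_powR; lra.
nra.
Qed.

(* The inverse bounds at the scalar level: [W = m^(p-2)] and [Y = m^(2-p)] are the weights
   of the exponents [p] and [p / (p - 1)], and [Z] is the actual weight, comparable to [Y]. *)
Lemma conjugate_scalar_bounds (c C lo hi W Y Z t s dt : R) :
  0 < c -> 0 < C -> 0 < lo -> 0 < hi -> 0 < W -> W * Y = 1 -> 0 <= t -> 0 <= s ->
  c * (t * (W * t)) <= dt -> c * (W * t) <= s -> s <= C * (W * t) ->
  lo * Y <= Z -> Z <= hi * Y ->
  c / C ^+ 2 / hi * (s * (Z * s)) <= dt /\ t <= (c * lo)^-1 * (Z * s).
Proof.
move=> c0 C0 lo0 hi0 W0 WY t0 s0 mono s_ge s_le Zlo Zhi.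
have Y0 : 0 < Y by rewrite -(pmulr_rgt0 _ W0) WY.
have C2 : 0 < C ^+ 2 by rewrite exprn_gt0.
have cC0 : 0 <= c / C ^+ 2 by rewrite divr_ge0 // ltW.
split.
  have s2 : s ^+ 2 <= C ^+ 2 * W ^+ 2 * t ^+ 2.
    by rewrite -!exprMn -!mulrA; apply: ler_pM.
  have -> : c / C ^+ 2 / hi * (s * (Z * s)) = c / C ^+ 2 * (Z / hi) * s ^+ 2 by ring.
  apply: le_trans (_ : c / C ^+ 2 * Y * s ^+ 2 <= _).
    by rewrite ler_wpM2r ?sqr_ge0 // ler_wpM2l // ler_pdivrMr // mulrC.
  apply: le_trans (_ : c / C ^+ 2 * Y * (C ^+ 2 * W ^+ 2 * t ^+ 2) <= _).
    by rewrite ler_wpM2l // mulr_ge0 // ltW.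
  apply: le_trans mono; rewrite le_eqVlt; apply/orP; left; apply/eqP.
  by rewrite -[in RHS](mulr1 c) -WY; field; rewrite gt_eqF.
have ct : c * t <= s * Y.
  by have := ler_wpM2r (ltW Y0) s_ge; rewrite -mulrA mulrAC WY mul1r.
have ctlo : c * t * lo <= Z * s.
  apply: le_trans (_ : s * Y * lo <= _); first by rewrite ler_wpM2r // ltW.
  have -> : s * Y * lo = lo * Y * s by ring.
  by rewrite ler_wpM2r.
have -> : t = (c * lo)^-1 * (c * t * lo) by field; rewrite !gt_eqF.
by rewrite ler_wpM2l // invr_ge0 mulr_ge0 // ltW.
Qed.

End ConjugateWeights.

Section Structure.
Variables (R : realType) (n d : nat).
Local Notation M := 'M[R]_(n, d).
Local Notation dot := (@frob_dot R n d).
Local Notation nrm := (@frob_norm R n d).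

(* [has_structure] with explicit constants, and with [(phi_{q,e})_a(t)] replaced by the
   comparable quantity [t * (phi_{q,e})'_a(t) = t * phi_d q (e + a) t] *)
Definition phi_d_bounds (q e c C : R) (T : M -> M) := forall P Q : M, Q != 0 ->
  c * (nrm (Q - P) * phi_d q (e + nrm Q) (nrm (Q - P))) <= dot (T Q - T P) (Q - P) /\
  nrm (T Q - T P) <= C * phi_d q (e + nrm Q) (nrm (Q - P)).

Definition phi_d_structure (q e : R) (T : M -> M) :=
  exists c C : R, [/\ 0 < c, 0 < C & phi_d_bounds q e c C T].

Lemma has_structure_phi_d (q e : R) (T : M -> M) : 1 < q -> 0 <= e ->
  has_structure q e T -> phi_d_structure q e T.
Proof.
move=> q1 e0 [_ [_ [C0 [C1 [C0_gt0 [C1_gt0 TC]]]]]].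
exists (C0 * (2^-1 `^ (q - 1) / 4)), C1; split => //; first by rewrite !mulr_gt0 ?powR_gt0.
move=> P Q Q0; have [mono lip] := TC P Q Q0.
have nQ := frob_norm_gt0 Q0; have nQP := frob_norm_ge0 (Q - P).
split; last by rewrite -shifted_d_phi_d.
by apply: le_trans mono; rewrite -mulrA ler_pM2l // shifted_phi_d_ge.
Qed.

Lemma phi_d_structure_has_structure (q e : R) (T : M -> M) : 1 < q -> 0 <= e ->
  continuous T -> T 0 = 0 -> phi_d_structure q e T -> has_structure q e T.
Proof.
move=> q1 e0 T_cont T0 [c [C [c0 C0 TC]]].
do 2 split => //; exists c, C; do 2 split => //.
move=> P Q Q0; have [mono lip] := TC P Q Q0.
have nQ := frob_norm_gt0 Q0; have nQP := frob_norm_ge0 (Q - P).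
split; last by rewrite shifted_d_phi_d.
by apply: le_trans mono; rewrite ler_pM2l // shifted_phi_d_le.
Qed.

Section PhiDBounds.
Variables (q e c C : R) (T : M -> M).
Hypotheses (q1 : 1 < q) (e0 : 0 <= e) (c0 : 0 < c) (C0 : 0 < C).
Hypothesis TC : phi_d_bounds q e c C T.

Lemma phi_d_bounds_between (P Q : M) : exists b, [/\ e <= b, b <= e + nrm P + nrm Q,
  c * (nrm (Q - P) * phi_d q b (nrm (Q - P))) <= dot (T Q - T P) (Q - P) &
  nrm (T Q - T P) <= C * phi_d q b (nrm (Q - P))].
Proof.
have [Q0|Q0] := eqVneq Q 0; last first.
  have [mono lip] := @TC P Q Q0.
  by exists (e + nrm Q); rewrite lerDl frob_norm_ge0 -addrA lerD2l lerDr frob_norm_ge0.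
have [P0|P0] := eqVneq P 0.
  by exists e; rewrite Q0 P0 !subrr !frob_norm0 frob_dot0l /phi_d !mulr0 !addr0 !lexx.
have [mono lip] := @TC Q P P0.
exists (e + nrm P); rewrite !lerDl !frob_norm_ge0.
have -> : dot (T Q - T P) (Q - P) = dot (T P - T Q) (P - Q).
  by rewrite -(opprB (T P)) -(opprB P) frob_dotNl frob_dotNr opprK.
by rewrite frob_distC (frob_distC (T Q)).
Qed.

Lemma phi_d_bounds_inj : injective T.
Proof.
move=> P Q TPQ; apply/eqP; apply: contraT => PQ.
have [b [eb _ mono _]] := phi_d_bounds_between P Q.
rewrite TPQ subrr frob_dot0l in mono.
have QP_gt0 : 0 < nrm (Q - P) by rewrite frob_norm_gt0 // subr_eq0 eq_sym.
have : 0 < c * (nrm (Q - P) * phi_d q b (nrm (Q - P))).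
  apply: mulr_gt0 => //; apply: mulr_gt0 => //; apply: phi_d_gt0 => //.
  by apply: ltr_wpDl => //; exact: le_trans eb.
by rewrite ltNge mono.
Qed.

Lemma phi_d_bounds_continuous : continuous T.
Proof.
apply: frob_continuous => X eps eps0.
have B0 : 0 <= e + 2 * nrm X + 1 by rewrite !addr_ge0 ?mulr_ge0 ?frob_norm_ge0.
have [rho rho0 phi_small] := phi_d_small q1 B0 (divr_gt0 eps0 C0).
exists (minr rho 1) => [|Y]; first by rewrite lt_min rho0 ltr01.
rewrite lt_min => /andP[XY_rho XY1].
have [b [eb bXY _ lip]] := phi_d_bounds_between Y X.
have bB : b <= e + 2 * nrm X + 1.
  have nY : nrm Y - nrm X <= nrm (X - Y) by rewrite frob_distC frob_lerB_dist.
  lra.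
apply: le_lt_trans lip _; rewrite mulrC -ltr_pdivlMr //.
by apply: phi_small => //; [exact: le_trans eb | exact: frob_norm_ge0].
Qed.

Lemma phi_d_bounds_dist_ge (P Q : M) : Q != 0 ->
  c * phi_d q (e + nrm Q) (nrm (Q - P)) <= nrm (T Q - T P).
Proof.
move=> Q0; have [mono _] := @TC P Q Q0.
have [->|QP_neq0] := eqVneq (nrm (Q - P)) 0.
  by rewrite /phi_d !mulr0 frob_norm_ge0.
have QP_gt0 : 0 < nrm (Q - P) by rewrite lt_def QP_neq0 frob_norm_ge0.
rewrite -(ler_pM2r QP_gt0); apply: le_trans (frob_dot_le _ _).
by apply: le_trans mono; rewrite -mulrA [phi_d _ _ _ * _]mulrC.
Qed.

Lemma phi_d_bounds_coercive (T0 : T 0 = 0) (y : M) :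
  exists2 r : R, 0 <= r & forall x : M, r < nrm x -> nrm y < nrm (T x - y).
Proof.
(* once [|x|^(q-1) > K], the lower bound [c |x|^(q-1) / 3] on [|T x|] exceeds [2 |y|] *)
pose K := 6 * nrm y / c + 1.
have K0 : 0 < K by rewrite ltr_wpDl ?divr_ge0 ?mulr_ge0 ?frob_norm_ge0 // ltW.
exists (Num.max e (K `^ (q - 1)^-1)) => [|x]; first by rewrite le_max e0.
rewrite gt_max => /andP[ex Kx].
have x_gt0 : 0 < nrm x by apply: le_lt_trans ex.
have x0 : x != 0 by rewrite -frob_norm_eq0 gt_eqF.
have K_lt : K < nrm x `^ (q - 1).
  have q1_neq0 : q - 1 != 0 by rewrite gt_eqF // subr_gt0.
  rewrite -[X in X < _](powRVK q1_neq0 (ltW K0)).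
  by apply: gt0_ltr_powR; rewrite ?subr_gt0 ?nnegrE ?powR_ge0 ?frob_norm_ge0.
have phi_ge : nrm x `^ (q - 1) / 3 <= phi_d q (e + nrm x) (nrm x).
  have e2x : e + nrm x + nrm x <= 3 * nrm x by have := ltW ex; lra.
  apply: le_trans (powR_le_phi_d q x_gt0 (addr_ge0 e0 (ltW x_gt0)) e2x).
  rewrite ler_pM2r ?invr_gt0 //; apply: ge0_ler_powR; rewrite ?nnegrE ?subr_ge0 ?(ltW q1) //.
  - exact: ltW x_gt0.
  - by rewrite !addr_ge0 // ltW.
  - by rewrite lerDr addr_ge0 // ltW.
have cK : c * K / 3 <= c * phi_d q (e + nrm x) (nrm x).
  by rewrite -mulrA ler_pM2l //; apply: le_trans phi_ge; rewrite ler_pM2r ?invr_gt0 // ltW.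
have cKE : c * K / 3 = 2 * nrm y + c / 3 by rewrite /K; field; rewrite gt_eqF.
have nTx : c * phi_d q (e + nrm x) (nrm x) <= nrm (T x).
  by have := phi_d_bounds_dist_ge 0 x0; rewrite T0 !subr0.
have nTxy : nrm (T x) - nrm y <= nrm (T x - y) := frob_lerB_dist (T x) y.
have c3 : 0 < c / 3 by rewrite divr_gt0.
lra.
Qed.

Lemma phi_d_bounds_dist_min (T0 : T 0 = 0) (y : M) :
  exists x0 : M, forall z, nrm (T x0 - y) <= nrm (T z - y).
Proof.
have [r r0 coercive] := phi_d_bounds_coercive T0 y.
pose box := [set A : M | forall i j, `|A i j| <= r].
have box0 : box 0 by move=> i j; rewrite mxE normr0.
have dist_cont : continuous (fun x => nrm (T x - y)).
  move=> x; apply: continuous_comp; last exact: frob_norm_continuous.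
  by apply: continuousB; [exact: phi_d_bounds_continuous | exact: cst_continuous].
have [x0 _ x0_min] := compact_EVT_min (ex_intro _ 0 box0) (@mx_box_compact R n d r)
  (continuous_subspaceT dist_cont).
exists x0 => z; have [zr|rz] := lerP (nrm z) r.
  by apply: x0_min; rewrite inE => i j; apply: le_trans (entry_le_frob_norm _ _ _) zr.
have := x0_min 0; rewrite inE T0 sub0r frob_normN => /(_ box0) x0_le.
exact/ltW/(le_lt_trans x0_le)/coercive.
Qed.

(* The witness is [x0 + t (y - T x0)] for small [t]: the monotonicity term, linear in the
   step, beats the square of the Lipschitz term. *)
Lemma phi_d_bounds_descent (x0 y : M) : T x0 != y ->
  exists x1 : M, nrm (T x1 - y) < nrm (T x0 - y).
Proof.
move=> Tx0y; set v := y - T x0.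
have v_gt0 : 0 < nrm v by rewrite frob_norm_gt0 // subr_eq0 eq_sym.
have B0 : 0 <= e + 2 * nrm x0 + nrm v by rewrite !addr_ge0 ?mulr_ge0 ?frob_norm_ge0.
have eta0 : 0 < 2 * c * nrm v / C ^+ 2 by rewrite !mulr_gt0 ?invr_gt0 ?exprn_gt0.
have [rho rho0 phi_small] := phi_d_small q1 B0 eta0.
pose t := minr 1 (rho / (2 * nrm v)).
have t0 : 0 < t by rewrite lt_min ltr01 divr_gt0 // mulr_gt0.
have t1 : t <= 1 by rewrite ge_min lexx.
have tv_rho : t * nrm v < rho.
  have : t <= rho / (2 * nrm v) by rewrite ge_min lexx orbT.
  rewrite ler_pdivlMr ?mulr_gt0 //; lra.
exists (x0 + t *: v).
have [b [eb bB mono lip]] := phi_d_bounds_between x0 (x0 + t *: v).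
rewrite addrAC subrr add0r frob_normZ gtr0_norm // frob_dotZr in mono lip.
set D := T (x0 + t *: v) - T x0 in mono lip.
set g := phi_d q b (t * nrm v) in mono lip.
have b0 : 0 <= b := le_trans e0 eb.
have bB' : b <= e + 2 * nrm x0 + nrm v.
  have : nrm (x0 + t *: v) <= nrm x0 + t * nrm v.
    by rewrite -[t in t * _]gtr0_norm // -frob_normZ frob_normD.
  have : t * nrm v <= nrm v by rewrite ler_piMl ?frob_norm_ge0.
  lra.
have g_gt0 : 0 < g by rewrite phi_d_gt0 // ?mulr_gt0 // ltr_wpDl // mulr_gt0.
have Cg : C ^+ 2 * g < 2 * c * nrm v.
  rewrite mulrC -ltr_pdivlMr ?exprn_gt0 //.
  by apply: phi_small; rewrite ?mulr_ge0 ?frob_norm_ge0 // ltW.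
have mono' : c * nrm v * g <= dot D v.
  by rewrite -(ler_pM2l t0); apply: le_trans mono; rewrite !mulrA (mulrC t).
have lip2 : nrm D ^+ 2 <= C ^+ 2 * g ^+ 2.
  by rewrite -exprMn ler_pXn2r // nnegrE ?frob_norm_ge0 // (mulr_ge0 (ltW C0) (ltW g_gt0)).
have -> : T (x0 + t *: v) - y = D - v by rewrite /D /v opprB addrA subrK.
rewrite (frob_distC (T x0)) -/v -(ltr_pXn2r (isT : (0 < 2)%N)) ?nnegrE ?frob_norm_ge0 //.
rewrite sqr_frob_normB.
have : C ^+ 2 * g ^+ 2 < 2 * c * nrm v * g by rewrite expr2 mulrA ltr_pM2r.
lra.
Qed.

Lemma phi_d_bounds_surj (T0 : T 0 = 0) (y : M) : exists x : M, T x = y.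
Proof.
have [x0 x0_min] := phi_d_bounds_dist_min T0 y.
exists x0; apply/eqP; apply: contraT => Tx0y.
have [x1 x1_lt] := phi_d_bounds_descent Tx0y.
by have := x0_min x1; rewrite leNgt x1_lt.
Qed.

End PhiDBounds.

Lemma phi_d_bounds_inverse (p dl c C : R) (S D : M -> M) :
  1 < p -> 0 <= dl -> 0 < c -> 0 < C -> phi_d_bounds p dl c C S -> S 0 = 0 ->
  cancel S D -> cancel D S -> phi_d_structure (p / (p - 1)) (dl `^ (p - 1)) D.
Proof.
move=> p1 dl0 c0 C0 SC S0 SD DS.
have [k1 [k2 [k1_gt0 k2_gt0 weights]]] := phi_d_weight_comparable p1 dl0 c0 C0.
have [lo [hi [lo0 hi0 sandwich]]] := powR_sandwich (p / (p - 1) - 2) k1_gt0 k2_gt0.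
exists (c / C ^+ 2 / hi), (c * lo)^-1; split.
- by rewrite !divr_gt0 ?exprn_gt0.
- by rewrite invr_gt0 mulr_gt0.
move=> P Q Q0; set a := D Q; set b := D P.
have a0 : a != 0 by apply: contraNneq Q0 => a0; rewrite -(DS Q) -/a a0 S0.
have [mono lip] := SC b a a0; rewrite !DS in mono lip.
have nQ := phi_d_bounds_dist_ge SC 0 a0; rewrite DS S0 !subr0 in nQ.
have nQP := phi_d_bounds_dist_ge SC b a0; rewrite !DS in nQP.
have [_ lipQ] := SC 0 a a0; rewrite DS S0 !subr0 in lipQ.
set t := nrm (a - b) in mono lip nQP *; set s := nrm (Q - P) in mono lip nQP *.
have [W_lo W_hi] := weights _ _ _ _ (frob_norm_gt0 a0) (frob_norm_ge0 _) nQ lipQ nQP lip.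
set m := dl + nrm a + t in W_lo W_hi.
have m0 : 0 < m by rewrite ltr_wpDr ?frob_norm_ge0 // ltr_wpDl ?frob_norm_gt0.
have [Z_lo Z_hi] := sandwich _ _ (powR_gt0 (p - 1) m0) W_lo W_hi.
rewrite -!powRrM (_ : (p - 1) * (p / (p - 1) - 2) = 2 - p) in Z_lo Z_hi; last first.
  by field; rewrite subr_eq0 gt_eqF.
have WY : m `^ (p - 2) * m `^ (2 - p) = 1.
  rewrite -powRD; last by rewrite (gt_eqF m0) implybT.
  by rewrite addrA subrK subrr powRr0.
rewrite frob_dotC; apply: (conjugate_scalar_bounds c0 C0 lo0 hi0 (powR_gt0 _ m0) WY) => //.
- exact: frob_norm_ge0.
- exact: frob_norm_ge0.
Qed.

End Structure.

Theorem lemma5p1 (R : realType) (n d : nat) (p delta : R)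
    (S : 'M[R]_(n, d) -> 'M[R]_(n, d)) :
  1 < p -> 0 <= delta -> has_structure p delta S ->
  bijective S /\
  exists D : 'M[R]_(n, d) -> 'M[R]_(n, d),
    cancel S D /\ cancel D S /\
    has_structure (p / (p - 1)) (delta `^ (p - 1)) D.
Proof.
move=> p1 delta0 S_struct; have [_ [S0 _]] := S_struct.
have [c [C [c0 C0 SC]]] := has_structure_phi_d p1 delta0 S_struct.
have S_inj := phi_d_bounds_inj delta0 c0 SC.
have S_surj := phi_d_bounds_surj p1 delta0 c0 C0 SC S0.
pose D y := projT1 (cid (S_surj y)).
have DS : cancel D S by move=> y; rewrite /D; case: cid.
have SD : cancel S D by move=> x; apply: S_inj; rewrite DS.
split; first by exists D.
exists D; do 2 split => //.
have p'1 : 1 < p / (p - 1) by rewrite ltr_pdivlMr ?subr_gt0 // mul1r ltrBlDr ltrDl.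
have delta'0 : 0 <= delta `^ (p - 1) := powR_ge0 _ _.
have D_struct := phi_d_bounds_inverse p1 delta0 c0 C0 SC S0 SD DS.
have [c' [C' [_ C'0 DC]]] := D_struct.
have D0 : D 0 = 0 by rewrite -{1}S0 SD.
exact: phi_d_structure_has_structure p'1 delta'0 (phi_d_bounds_continuous p'1 delta'0 C'0 DC)
  D0 D_struct.
Qed.
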